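(* Let $q$ be an odd prime power, $d$ a positive integer, and $\varphi_d$ the coloring defined below. If $S \subseteq (\mathbb{F}_q^* )^d$ is a set of $p\ge 1$ vectors with a leftover structure under $\varphi_d$, then $\mathrm{FS}(S) \ge \lceil \log_2 p\rceil + 1$.
   Context: $\mathbb{F}_q^*$ is the set of nonzero elements of $\mathbb{F}_q$, endowed with an arbitrary fixed linear order; $(\mathbb{F}_q^* )^d$ is ordered lexicographically with respect to it. Let $C_d = \mathrm{DOT} \sqcup \mathrm{ZERO}\sqcup\mathrm{UP}\sqcup\mathrm{DOWN}$, where $\mathrm{DOT} = \mathbb{F}_q^*$ and ZERO, UP, DOWN are three disjoint copies of $\{1,\dots,d\}\times \mathbb{F}_q$. For distinct $x<y$ in $(\mathbb{F}_q^* )^d$, let $i$ be the first coordinate where $x$ and $y$ differ, and $x\cdot y$ the standard dot product; $\varphi_d(x,y)=\varphi_d(y,x)$ is $(i,x_i+y_i)$ in ZERO if $x\cdot y=0$; $(i,x_i+y_i)$ in UP if $x\cdot y\ne 0$ and $x\cdot y=x\cdot x$; $(i,x_i+y_i)$ in DOWN if $x\cdot y\notin\{0,x\cdot x\}$ and $x\cdot y=y\cdot y$; and $x\cdot y\in\mathrm{DOT}$ otherwise. For a vertex set $A$, $\varphi_d(A)$ is the set of colors on pairs inside $A$. $S$ has a leftover structure under $\varphi_d$ if $|S|=1$, or $S$ has a partition $S=A\cup B$ into nonempty sets such that $A$ and $B$ each have a leftover structure, $\varphi_d(A)\cap\varphi_d(B)=\emptyset$, and there is a color $\gamma$ with $\varphi_d(a,b)=\gamma$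 for all $a\in A$, $b\in B$ and $\gamma\notin\varphi_d(A)\cup\varphi_d(B)$. Distinct vectors $s_1,\dots,s_t$ form a $t$-falling star if there are colors $\alpha_2,\dots,\alpha_t$ with $\varphi_d(s_i,s_j)=\alpha_i$ for all $1\le j<i\le t$; $\mathrm{FS}(S)$ is the maximum $t$ such that $S$ contains a $t$-falling star. *)

From HB Require Import structures.
From mathcomp Require Import all_boot all_order all_algebra all_field.
Set Implicit Arguments. Unset Strict Implicit. Unset Printing Implicit Defensive.
Import GRing.Theory.
Local Open Scope ring_scope.

(* The arbitrary fixed linear order on
   F_q^* is given by an injective rank map r : F -> nat (x < y iff r x < r y). *)

Section Coloring.
Variables (F : finFieldType) (d : nat).

Definition vec := {ffun 'I_d -> F}.

Definition nonzero_vec (x : vec) : bool := [forall i, x i != 0].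

(* The color set C_d = DOT ⊔ ZERO ⊔ UP ⊔ DOWN.  Indices are 0-based ('I_d). *)
Inductive color : Type :=
| Dot of F
| Zero of 'I_d & F
| Up of 'I_d & F
| Down of 'I_d & F.

Definition dotp (x y : vec) : F := \sum_(j < d) x j * y j.

Definition firstdiff (x y : vec) : option 'I_d :=
  [pick i | (x i != y i) && [forall j : 'I_d, (j < i)%N ==> (x j == y j)]].

(* color of the pair {x,y} when x < y and i is their first differing index *)
Definition col_ord (x y : vec) (i : 'I_d) : color :=
  let s := x i + y i in
  let xy := dotp x y in
  if xy == 0 then Zero i s
  else if xy == dotp x x then Up i s
  else if xy == dotp y y then Down i s
  else Dot xy.

Definition lexlt (r : F -> nat) (x y : vec) : bool :=
  if firstdiff x y is Some i then (r (x i) < r (y i))%N else false.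

(* phi_d(x,y) = phi_d(y,x); only meaningful for x <> y *)
Definition phi (r : F -> nat) (x y : vec) : color :=
  match firstdiff x y with
  | None => Dot 0
  | Some i => if (r (x i) < r (y i))%N then col_ord x y i else col_ord y x i
  end.

Definition in_colors (r : F -> nat) (A : {set vec}) (g : color) : Prop :=
  exists a1 a2, [/\ a1 \in A, a2 \in A, a1 != a2 & phi r a1 a2 = g].

Inductive leftover (r : F -> nat) : {set vec} -> Prop :=
| leftover_single : forall v : vec, leftover r [set v]
| leftover_split : forall (A B : {set vec}) (g : color),
    A != set0 -> B != set0 -> [disjoint A & B] ->
    leftover r A -> leftover r B ->
    (forall c, in_colors r A c -> ~ in_colors r B c) ->
    (forall a b, a \in A -> b \in B -> phi r a b = g) ->
    ~ in_colors r A g -> ~ in_colors r B g ->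
    leftover r (A :|: B).

(* s = [:: s_1; ...; s_t] (0-based) is a t-falling star in S *)
Definition falling_star (r : F -> nat) (S : {set vec}) (s : seq vec) : Prop :=
  uniq s /\ {subset s <= S} /\
  exists alpha : nat -> color,
    forall i j, (j < i)%N -> (i < size s)%N ->
      phi r (nth (s`_0) s i) (nth (s`_0) s j) = alpha i.

End Coloring.

From mathcomp Require Import all_boot all_order all_algebra all_field.

Set Implicit Arguments.
Unset Strict Implicit.
Unset Printing Implicit Defensive.

(* Induct on the leftover structure S = A ∪ B and say |B| <= |A|.  All pairs
   across the split have the same color g, so any b ∈ B appended to a longest
   falling star of A is again a falling star.  Since |A ∪ B| <= 2|A|, one more
   vertex pays for the one extra halving: ⌈log2 |A ∪ B|⌉ <= ⌈log2 |A|⌉ + 1.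
   Neither the parity of q, nor d > 0, nor the nonzero coordinates are used. *)

Section FallingStar.
Variables (F : finFieldType) (d : nat) (r : F -> nat).
Implicit Types (A B S : {set vec F d}) (s : seq (vec F d)).

Lemma firstdiffC (x y : vec F d) : firstdiff y x = firstdiff x y.
Proof.
apply: eq_pick => i /=; rewrite eq_sym; congr (_ && _).
by apply: eq_forallb => j; rewrite eq_sym.
Qed.

Lemma phiC (hr : injective r) (x y : vec F d) : phi r x y = phi r y x.
Proof.
rewrite /phi [firstdiff y x]firstdiffC /firstdiff; case: pickP => [i /andP[xy_i _]|//].
have : r (x i) != r (y i) by apply: contra xy_i => /eqP/hr/eqP.
by case: ltngtP.
Qed.

Lemma falling_star_rcons S A s b g :
    falling_star r A s -> {subset A <= S} -> b \in S -> b \notin A ->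
    (forall a, a \in A -> phi r b a = g) -> falling_star r S (rcons s b).
Proof.
move=> [uniq_s [sA [alpha star_s]]] AS Sb Ab colb.
have sb : b \notin s by apply: contra Ab => /sA.
split; first by rewrite rcons_uniq sb uniq_s.
split=> [x|]; first by rewrite mem_rcons inE => /predU1P[-> | /sA/AS].
exists (fun i => if (i < size s)%N then alpha i else g) => i j lt_ji.
rewrite size_rcons ltnS leq_eqVlt => /predU1P[i_s | lt_is].
  subst i; rewrite ltnn !nth_rcons ltnn eqxx lt_ji.
  exact/colb/sA/mem_nth.
have lt_js := ltn_trans lt_ji lt_is.
rewrite lt_is !nth_rcons lt_is lt_js.
rewrite (set_nth_default (s`_0)%R _ lt_is) (set_nth_default (s`_0)%R _ lt_js).
exact: star_s.
Qed.

Lemma up_log2_addn (a b : nat) : (0 < a)%N -> (b <= a)%N ->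
  (up_log 2 (a + b) <= (up_log 2 a).+1)%N.
Proof.
by move=> a_gt0 le_ba; rewrite -up_log2_double // leq_up_log // -addnn leq_add2l.
Qed.

Definition has_log_star S : Prop :=
  exists s, falling_star r S s /\ (up_log 2 #|S| + 1 <= size s)%N.

Lemma has_log_star_set1 v : has_log_star [set v].
Proof.
exists [:: v]; split; last by rewrite cards1 up_log1.
split=> //; split=> [x|]; first by rewrite !inE.
by exists (fun=> phi r v v) => -[].
Qed.

Lemma has_log_star_setU A B g :
    [disjoint A & B] -> B != set0 -> (#|B| <= #|A|)%N ->
    (forall a b, a \in A -> b \in B -> phi r b a = g) ->
    has_log_star A -> has_log_star (A :|: B).
Proof.
move=> dAB /set0Pn[b Bb] le_BA colAB [s [star_s size_s]].
have A_gt0 : (0 < #|A|)%N by apply: leq_trans le_BA; apply/card_gt0P; exists b.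
exists (rcons s b); split.
  apply: (falling_star_rcons (g := g) star_s) => [x Ax | | | a Aa].
  - by rewrite inE Ax.
  - by rewrite inE Bb orbT.
  - by rewrite (disjointFl dAB Bb).
  - exact: colAB.
rewrite cardsU (disjoint_setI0 dAB) cards0 subn0 size_rcons addn1 ltnS.
by rewrite (leq_trans (up_log2_addn A_gt0 le_BA)) // -addn1.
Qed.

End FallingStar.

Theorem lemma3p10 (F : finFieldType) (d : nat) (r : F -> nat)
  (hodd : odd #|F|) (hd : (0 < d)%N) (hr : injective r)
  (S : {set vec F d})
  (hS : forall x, x \in S -> nonzero_vec x)
  (hp : (1 <= #|S|)%N)
  (hlo : leftover r S) :
  exists s : seq (vec F d),
    falling_star r S s /\ (up_log 2 #|S| + 1 <= size s)%N.
Proof.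
elim: hlo => {S hS hp} [v | A B g A0 B0 dAB _ starA _ starB _ colAB _ _].
  exact: has_log_star_set1.
have [le_BA | /ltnW le_AB] := leqP #|B| #|A|.
  apply: (has_log_star_setU dAB B0 le_BA _ starA) => a b Aa Bb.
  by rewrite (phiC hr); apply: colAB.
rewrite setUC; apply: (has_log_star_setU _ A0 le_AB _ starB) => [|b a Bb Aa].
  by rewrite disjoint_sym.
exact: colAB.
Qed.
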